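(* Let $\alpha: I\to M$ be a unit-speed curve on an oriented surface $M\subset E^3$ with Darboux frame $\{T,V,U\}$ and curvatures $k_g,k_n,\tau_g$, and assume $(k_g(s),k_n(s))\neq(0,0)$ for all $s\in I$. Let $\gamma(s)=\alpha(s)+y_1(s)T(s)+y_2(s)V(s)+y_3(s)U(s)$, with $y_1,y_2,y_3$ smooth functions on $I$, be an associated curve of $\alpha$ whose tangent vector $\gamma'(s)$ is linearly dependent with $T(s)$, i.e. $\gamma'(s)=R(s)T(s)$ with $R(s)\neq 0$ for all $s$. Then the following are equivalent: (i) $\gamma$ is a general helix; (ii) $\alpha$ is a helical curve on $M$; (iii) $\alpha$ is a $D_n$-Darboux slant helix on $M$.
   Context: $M$ is an oriented surface in Euclidean 3-space $E^3$ and $\alpha:I\to M$ is a unit-speed curve with arc-length parameter $s$. Its Darboux frame $\{T,V,U\}$ consists of the unit tangent $T=\alpha'$, the unit surface normal $U$ of $M$ along $\alpha$, and $V=U\times T$; it satisfies $T'=k_gV+k_nU$, $V'=-k_gT+\tau_gU$, $U'=-k_nT-\tau_gV$, where $k_g,k_n,\tau_g$ are the geodesic curvature, normal curvature and geodesic torsion of $\alpha$. A regular curve in $E^3$ is a general helix if its unit tangent makes a constant angle with a fixed direction. $\alpha$ is a helical curve on $M$ if there are a fixed unit vector $d$ and a constant angle $\theta$ with $\langle T,d\rangle=\cos\theta$. The normal Darboux vector field of $\alpha$ is $D_n=-k_nV+k_gU$; $\alpha$ is a $D_n$-Darboux slant helix if the unit vector field $D_n/\|D_n\|$ makes a constant angle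 with a fixed unit direction. *)

From Stdlib Require Import Reals.
From Coquelicot Require Import Coquelicot.
Open Scope R_scope.

Definition vec3 : Type := (R * R * R)%type.
Definition vx (v : vec3) : R := fst (fst v).
Definition vy (v : vec3) : R := snd (fst v).
Definition vz (v : vec3) : R := snd v.
Definition mkv (a b c : R) : vec3 := (a, b, c).

Definition vadd (u v : vec3) : vec3 := mkv (vx u + vx v) (vy u + vy v) (vz u + vz v).
Definition vscale (k : R) (v : vec3) : vec3 := mkv (k * vx v) (k * vy v) (k * vz v).
Definition dot (u v : vec3) : R := vx u * vx v + vy u * vy v + vz u * vz v.
Definition vnorm (v : vec3) : R := sqrt (dot v v).
Definition cross (u v : vec3) : vec3 :=
  mkv (vy u * vz v - vz u * vy v) (vz u * vx v - vx u * vz v) (vx u * vy v - vy u * vx v).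
Definition vzero : vec3 := mkv 0 0 0.

Definition in_I (a b : Rbar) (s : R) : Prop := Rbar_lt a s /\ Rbar_lt s b.

Definition vderiv (f : R -> vec3) (s : R) (f' : vec3) : Prop :=
  is_derive (fun t => vx (f t)) s (vx f') /\
  is_derive (fun t => vy (f t)) s (vy f') /\
  is_derive (fun t => vz (f t)) s (vz f').

Definition smooth_on (a b : Rbar) (f : R -> R) : Prop :=
  forall (n : nat) (s : R), in_I a b s -> ex_derive_n f n s.
Definition vsmooth_on (a b : Rbar) (f : R -> vec3) : Prop :=
  smooth_on a b (fun t => vx (f t)) /\ smooth_on a b (fun t => vy (f t)) /\
  smooth_on a b (fun t => vz (f t)).

(** [alpha] is a unit-speed curve on I whose Darboux frame is {T, V, U}
    (U = unit surface normal along alpha, V = U x T) with geodesic curvature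
    kg, normal curvature kn and geodesic torsion tg. *)
Definition darboux_frame (a b : Rbar) (alpha T V U : R -> vec3)
    (kg kn tg : R -> R) : Prop :=
  vsmooth_on a b alpha /\ vsmooth_on a b U /\
  forall s, in_I a b s ->
    vderiv alpha s (T s) /\
    vnorm (T s) = 1 /\ vnorm (U s) = 1 /\ dot (T s) (U s) = 0 /\
    V s = cross (U s) (T s) /\
    vderiv T s (vadd (vscale (kg s) (V s)) (vscale (kn s) (U s))) /\
    vderiv V s (vadd (vscale (- kg s) (T s)) (vscale (tg s) (U s))) /\
    vderiv U s (vadd (vscale (- kn s) (T s)) (vscale (- tg s) (V s))).

Definition general_helix (a b : Rbar) (c : R -> vec3) : Prop :=
  exists c' : R -> vec3,
    (forall s, in_I a b s -> vderiv c s (c' s) /\ c' s <> vzero) /\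
    exists (d : vec3) (theta : R), vnorm d = 1 /\
      forall s, in_I a b s -> dot (vscale (/ vnorm (c' s)) (c' s)) d = cos theta.

Definition helical_curve (a b : Rbar) (T : R -> vec3) : Prop :=
  exists (d : vec3) (theta : R), vnorm d = 1 /\
    forall s, in_I a b s -> dot (T s) d = cos theta.

Definition Dn (V U : R -> vec3) (kg kn : R -> R) (s : R) : vec3 :=
  vadd (vscale (- kn s) (V s)) (vscale (kg s) (U s)).

Definition Dn_slant_helix (a b : Rbar) (V U : R -> vec3) (kg kn : R -> R) : Prop :=
  exists (d : vec3) (phi : R), vnorm d = 1 /\
    forall s, in_I a b s ->
      dot (vscale (/ vnorm (Dn V U kg kn s)) (Dn V U kg kn s)) d = cos phi.

Definition assoc_curve (alpha T V U : R -> vec3) (y1 y2 y3 : R -> R) (s : R) : vec3 :=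
  vadd (alpha s) (vadd (vscale (y1 s) (T s))
    (vadd (vscale (y2 s) (V s)) (vscale (y3 s) (U s)))).

(* Since gamma' = R T with R continuous and nowhere zero, R has constant sign and the unit
   tangent of gamma is +T or -T throughout, which gives (i) <-> (ii).  The normal Darboux vector
   is D_n = T x T', so D_n/|D_n| is the binormal N of alpha seen as a space curve with unit
   tangent T.  If <T, d> is constant then T' is orthogonal to d, so <N, d>^2 = 1 - <T, d>^2 by
   Parseval in the frame (T, T', N), and the continuous function <N, d> is constant.
   Conversely, if <N, d> = c, differentiating with the Frenet formula N' = -tau T'/|T'| gives
   tau <T', d> = 0.  When c^2 <> 1 the zero set of tau is open and closed in I, so either
   tau = 0 on I, N is constant and T is orthogonal to it, or <T', d> = 0 on I and <T, d> is
   constant. *)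

From Stdlib Require Import Reals Lra Psatz ClassicalEpsilon.
From Coquelicot Require Import Coquelicot.
Open Scope R_scope.

(** * Vector algebra in E^3 *)

Lemma vec3_eq (u v : vec3) : vx u = vx v -> vy u = vy v -> vz u = vz v -> u = v.
Proof. destruct u as [[u1 u2] u3], v as [[v1 v2] v3]; cbn; intros -> -> ->; reflexivity. Qed.

Ltac vec3_ring :=
  repeat match goal with v : vec3 |- _ => destruct v as [[? ?] ?] end;
  unfold dot, cross, vadd, vscale, vzero, mkv, vx, vy, vz; cbn; ring.

Lemma dot_comm u v : dot u v = dot v u.
Proof. vec3_ring. Qed.

Lemma dot_scale_l k u v : dot (vscale k u) v = k * dot u v.
Proof. vec3_ring. Qed.

Lemma dot_add_l u w v : dot (vadd u w) v = dot u v + dot w v.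
Proof. vec3_ring. Qed.

Lemma dot_cross_l u v : dot (cross u v) u = 0.
Proof. vec3_ring. Qed.

Lemma dot_cross_r u v : dot (cross u v) v = 0.
Proof. vec3_ring. Qed.

Lemma dot_zero_r u : dot u vzero = 0.
Proof. vec3_ring. Qed.

Lemma dot_self_ge0 u : 0 <= dot u u.
Proof. destruct u as [[u1 u2] u3]; unfold dot, vx, vy, vz; cbn; nra. Qed.

Lemma dot_cross_cross u v w z :
  dot (cross u v) (cross w z) = dot u w * dot v z - dot u z * dot v w.
Proof. vec3_ring. Qed.

(* Binet-Cauchy: the right-hand side is the Gram determinant of [u, v, w] against [u, v, z]. *)
Lemma dot_cross_mul u v w z :
  dot (cross u v) w * dot (cross u v) z =
    dot u u * (dot v v * dot w z - dot v z * dot w v)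
  - dot u v * (dot v u * dot w z - dot v z * dot w u)
  + dot u z * (dot v u * dot w v - dot v v * dot w u).
Proof. vec3_ring. Qed.

Lemma dot_self_mul_dot_cross u v w e :
  dot v v * dot (cross u w) e =
  dot w v * dot (cross u v) e - dot (cross u v) w * dot v e + dot u v * dot (cross v w) e.
Proof. vec3_ring. Qed.

Lemma vec3_eq_dot u v : (forall e, dot u e = dot v e) -> u = v.
Proof.
  intros H; apply vec3_eq;
    [specialize (H (mkv 1 0 0)) | specialize (H (mkv 0 1 0)) | specialize (H (mkv 0 0 1))];
    revert H; unfold dot, mkv, vx, vy, vz; cbn; lra.
Qed.

Lemma dot_unit_bound u v : dot u u = 1 -> dot v v = 1 -> -1 <= dot u v <= 1.
Proof.
  intros Hu Hv.
  assert (H := dot_self_ge0 (cross u v)).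
  rewrite dot_cross_cross, Hu, Hv, (dot_comm v u) in H.
  split; nra.
Qed.

Lemma vnorm_1_dot u : vnorm u = 1 <-> dot u u = 1.
Proof.
  unfold vnorm; split; intros H.
  - rewrite <- (sqrt_sqrt _ (dot_self_ge0 u)), H; ring.
  - rewrite H; apply sqrt_1.
Qed.

Lemma vnorm_sq u : vnorm u * vnorm u = dot u u.
Proof. apply sqrt_sqrt, dot_self_ge0. Qed.

Lemma vnorm_pos u : 0 < dot u u -> 0 < vnorm u.
Proof. apply sqrt_lt_R0. Qed.

Definition vunit (v : vec3) : vec3 := vscale (/ vnorm v) v.

Lemma dot_vunit_l v e : dot (vunit v) e = dot v e / vnorm v.
Proof. unfold vunit, Rdiv; rewrite dot_scale_l; ring. Qed.

Lemma dot_vunit_self v : 0 < dot v v -> dot (vunit v) (vunit v) = 1.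
Proof.
  intros Hv; rewrite dot_vunit_l, dot_comm, dot_vunit_l, <- vnorm_sq.
  assert (H := vnorm_pos v Hv); field; lra.
Qed.

Lemma vunit_scale_pos r v : dot v v = 1 -> 0 < r -> vunit (vscale r v) = v.
Proof.
  intros Hv Hr; unfold vunit, vnorm.
  rewrite dot_scale_l, dot_comm, dot_scale_l, Hv, Rmult_1_r, sqrt_square by lra.
  apply vec3_eq; unfold vscale, mkv, vx, vy, vz; cbn; field; lra.
Qed.

Lemma vunit_scale_neg r v : dot v v = 1 -> r < 0 -> vunit (vscale r v) = vscale (-1) v.
Proof.
  intros Hv Hr; unfold vunit, vnorm.
  rewrite dot_scale_l, dot_comm, dot_scale_l, Hv, Rmult_1_r.
  replace (r * r) with (- r * - r) by ring; rewrite sqrt_square by lra.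
  apply vec3_eq; unfold vscale, mkv, vx, vy, vz; cbn; field; lra.
Qed.

(** * Derivatives of vector fields *)

(* Coquelicot's [is_derive_mult], [continuous_plus], ... are stated with the generic [mult] and
   [plus], which unification does not match against [Rmult] and [Rplus]. *)
Lemma is_derive_Rmult (f g : R -> R) s df dg :
  is_derive f s df -> is_derive g s dg ->
  is_derive (fun t => f t * g t) s (df * g s + f s * dg).
Proof. intros Hf Hg; exact (is_derive_mult f g s df dg Hf Hg Rmult_comm). Qed.

Lemma is_derive_Rplus (f g : R -> R) s df dg :
  is_derive f s df -> is_derive g s dg -> is_derive (fun t => f t + g t) s (df + dg).
Proof. exact (is_derive_plus f g s df dg). Qed.

Lemma is_derive_Rminus (f g : R -> R) s df dg :
  is_derive f s df -> is_derive g s dg -> is_derive (fun t => f t - g t) s (df - dg).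
Proof. exact (is_derive_minus f g s df dg). Qed.

Lemma continuous_Rplus (f g : R -> R) s :
  continuous f s -> continuous g s -> continuous (fun t => f t + g t) s.
Proof. exact (continuous_plus f g s). Qed.

Lemma continuous_Rminus (f g : R -> R) s :
  continuous f s -> continuous g s -> continuous (fun t => f t - g t) s.
Proof. exact (continuous_minus f g s). Qed.

Lemma continuous_Rmult (f g : R -> R) s :
  continuous f s -> continuous g s -> continuous (fun t => f t * g t) s.
Proof. exact (continuous_mult f g s). Qed.

Lemma is_derive_val (f : R -> R) (s l l' : R) : is_derive f s l -> l = l' -> is_derive f s l'.
Proof. intros H <-; exact H. Qed.

Definition vcontinuous (X : R -> vec3) (s : R) : Prop :=
  continuous (fun t => vx (X t)) s /\ continuous (fun t => vy (X t)) s /\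
  continuous (fun t => vz (X t)) s.

Lemma vderiv_continuous X s X' : vderiv X s X' -> vcontinuous X s.
Proof.
  intros (H1 & H2 & H3); repeat split;
    apply (ex_derive_continuous (V := R_NormedModule)); eexists; eassumption.
Qed.

Lemma vcontinuous_const (e : vec3) s : vcontinuous (fun _ => e) s.
Proof. repeat split; apply continuous_const. Qed.

Lemma vcontinuous_dot X Y s :
  vcontinuous X s -> vcontinuous Y s -> continuous (fun t => dot (X t) (Y t)) s.
Proof.
  intros (H1 & H2 & H3) (G1 & G2 & G3); unfold dot.
  apply continuous_Rplus; [apply continuous_Rplus |]; apply continuous_Rmult; assumption.
Qed.

Lemma vcontinuous_cross X Y s :
  vcontinuous X s -> vcontinuous Y s -> vcontinuous (fun t => cross (X t) (Y t)) s.
Proof.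
  intros (H1 & H2 & H3) (G1 & G2 & G3); unfold cross, mkv, vx, vy, vz; cbn.
  repeat split; apply continuous_Rminus; apply continuous_Rmult; assumption.
Qed.

Lemma vderiv_unique X s A B : vderiv X s A -> vderiv X s B -> A = B.
Proof.
  intros (H1 & H2 & H3) (G1 & G2 & G3); apply vec3_eq.
  - now rewrite <- (is_derive_unique _ _ _ H1), <- (is_derive_unique _ _ _ G1).
  - now rewrite <- (is_derive_unique _ _ _ H2), <- (is_derive_unique _ _ _ G2).
  - now rewrite <- (is_derive_unique _ _ _ H3), <- (is_derive_unique _ _ _ G3).
Qed.

Lemma vderiv_ext_loc X Y s A :
  locally s (fun t => X t = Y t) -> vderiv X s A -> vderiv Y s A.
Proof.
  intros HXY (H1 & H2 & H3); refine (conj _ (conj _ _)); eapply is_derive_ext_loc; try eassumption;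
    eapply filter_imp; try exact HXY; intros t ->; reflexivity.
Qed.

Lemma vderiv_const (e : vec3) s : vderiv (fun _ => e) s vzero.
Proof.
  refine (conj _ (conj _ _)); exact (is_derive_const (K := R_AbsRing) (V := R_NormedModule) _ s).
Qed.

Lemma vderiv_add X Y s X' Y' : vderiv X s X' -> vderiv Y s Y' ->
  vderiv (fun t => vadd (X t) (Y t)) s (vadd X' Y').
Proof.
  intros (H1 & H2 & H3) (G1 & G2 & G3); refine (conj _ (conj _ _));
    apply is_derive_Rplus; assumption.
Qed.

Lemma vderiv_scale f X s f' X' : is_derive f s f' -> vderiv X s X' ->
  vderiv (fun t => vscale (f t) (X t)) s (vadd (vscale f' (X s)) (vscale (f s) X')).
Proof. intros F (H1 & H2 & H3); refine (conj _ (conj _ _)); apply is_derive_Rmult; assumption. Qed.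

Lemma vderiv_cross X Y s X' Y' : vderiv X s X' -> vderiv Y s Y' ->
  vderiv (fun t => cross (X t) (Y t)) s (vadd (cross X' (Y s)) (cross (X s) Y')).
Proof.
  intros (H1 & H2 & H3) (G1 & G2 & G3); refine (conj _ (conj _ _));
    (eapply is_derive_val; [apply is_derive_Rminus;
                            apply is_derive_Rmult; eassumption | vec3_ring]).
Qed.

Lemma is_derive_dot X Y s X' Y' : vderiv X s X' -> vderiv Y s Y' ->
  is_derive (fun t => dot (X t) (Y t)) s (dot X' (Y s) + dot (X s) Y').
Proof.
  intros (H1 & H2 & H3) (G1 & G2 & G3); eapply is_derive_val.
  - apply is_derive_Rplus; [apply is_derive_Rplus |]; apply is_derive_Rmult; eassumption.
  - vec3_ring.
Qed.

Lemma is_derive_dot_const X s X' e : vderiv X s X' ->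
  is_derive (fun t => dot (X t) e) s (dot X' e).
Proof.
  intros HX; eapply is_derive_val.
  - exact (is_derive_dot X (fun _ => e) s X' vzero HX (vderiv_const e s)).
  - rewrite dot_zero_r; ring.
Qed.

Lemma is_derive_vnorm X s X' : vderiv X s X' -> 0 < dot (X s) (X s) ->
  is_derive (fun t => vnorm (X t)) s (dot (X s) X' / vnorm (X s)).
Proof.
  intros HX Hpos; eapply is_derive_val.
  - exact (is_derive_sqrt _ s _ (is_derive_dot X X s X' X' HX HX) Hpos).
  - unfold vnorm; rewrite (dot_comm X'); field; apply Rgt_not_eq, (vnorm_pos _ Hpos).
Qed.

Lemma is_derive_dot_vunit X s X' e : vderiv X s X' -> 0 < dot (X s) (X s) ->
  is_derive (fun t => dot (vunit (X t)) e) s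
    (dot X' e / vnorm (X s) - dot (X s) X' * dot (X s) e / vnorm (X s) ^ 3).
Proof.
  intros HX Hpos; assert (Hn := vnorm_pos _ Hpos).
  eapply is_derive_ext; [intro t; symmetry; apply dot_vunit_l |].
  eapply is_derive_val.
  - apply is_derive_Rmult; [apply is_derive_dot_const, HX |].
    exact (is_derive_inv _ s _ (is_derive_vnorm X s X' HX Hpos) ltac:(lra)).
  - cbv beta; field; lra.
Qed.

(** * Connectedness of the interval *)

Lemma in_I_locally a b s : in_I a b s -> locally s (in_I a b).
Proof.
  intros Hs.
  assert (Ho : open (fun u : R => Rbar_lt a u /\ Rbar_lt u b))
    by (apply open_and; [apply open_Rbar_gt | apply open_Rbar_lt]).
  exact (Ho s Hs).
Qed.

Lemma in_I_between a b x y t : in_I a b x -> in_I a b y -> x <= t <= y -> in_I a b t.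
Proof.
  unfold in_I; intros [Ax Bx] [Ay By] [Hxt Hty]; split.
  - destruct a; cbn in *; auto; lra.
  - destruct b; cbn in *; auto; lra.
Qed.

Lemma in_I_inhabited a b : Rbar_lt a b -> exists s, in_I a b s.
Proof.
  unfold in_I; destruct a as [a| |], b as [b| |]; cbn; intros H; try contradiction.
  - exists ((a + b) / 2); cbn; lra.
  - exists (a + 1); cbn; split; [lra | exact I].
  - exists (b - 1); cbn; split; [exact I | lra].
  - exists 0; cbn; split; exact I.
Qed.

(* The indicator of a locally constant predicate is continuous, so by the IVT it cannot
   change value between two points of the interval. *)
Lemma in_I_connected a b (P : R -> Prop) :
  (forall s, in_I a b s -> locally s (fun t => P t <-> P s)) ->
  forall x y, in_I a b x -> in_I a b y -> P x -> P y.
Proof.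
  intros HP.
  assert (Hlt : forall x y, in_I a b x -> in_I a b y -> x < y -> (P x <-> P y)).
  { intros x y Hx Hy Hxy.
    set (h t := if excluded_middle_informative (P t) then -1 else 1).
    assert (Hh : forall z, x <= z <= y -> continuity_pt h z).
    { intros z Hz; apply continuity_pt_filterlim.
      apply (continuous_ext_loc _ (fun _ => h z)); [| apply continuous_const].
      eapply filter_imp; [| exact (HP z (in_I_between a b x y z Hx Hy Hz))].
      intros t Ht; cbv beta in Ht; unfold h.
      destruct (excluded_middle_informative (P z)), (excluded_middle_informative (P t));
        first [reflexivity | tauto]. }
    split; intros Pxy; apply NNPP; intros NPxy.
    - destruct (Ranalysis5.IVT_interv h x y Hh Hxy) as [z [_ Hz]];
        unfold h in *; repeat destruct excluded_middle_informative; try tauto; lra.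
    - destruct (Ranalysis5.IVT_interv (fun t => - h t) x y) as [z [_ Hz]];
        [intros z Hz; apply continuity_pt_opp, Hh, Hz | exact Hxy | ..];
        unfold h in *; repeat destruct excluded_middle_informative; try tauto; lra. }
  intros x y Hx Hy Px.
  destruct (Rtotal_order x y) as [Hxy | [<- | Hxy]].
  - exact (proj1 (Hlt x y Hx Hy Hxy) Px).
  - exact Px.
  - exact (proj2 (Hlt y x Hy Hx Hxy) Px).
Qed.

Lemma is_derive_zero_const a b (f : R -> R) :
  (forall s, in_I a b s -> is_derive f s 0) ->
  forall x y, in_I a b x -> in_I a b y -> f x = f y.
Proof.
  intros Hf.
  assert (Hlt : forall x y, in_I a b x -> in_I a b y -> x < y -> f x = f y).
  { intros x y Hx Hy Hxy; apply (eq_is_derive f x y); [| exact Hxy].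
    intros t Ht; apply Hf, (in_I_between a b x y t Hx Hy Ht). }
  intros x y Hx Hy; destruct (Rtotal_order x y) as [Hxy | [<- | Hxy]]; auto.
  symmetry; auto.
Qed.

Lemma is_derive_locally_const (f : R -> R) (c s l : R) :
  locally s (fun t => f t = c) -> is_derive f s l -> l = 0.
Proof.
  intros Hc Hf.
  assert (H0 : is_derive f s 0).
  { apply (is_derive_ext_loc (fun _ => c));
      [| exact (is_derive_const (K := R_AbsRing) (V := R_NormedModule) c s)].
    eapply filter_imp; [| exact Hc]; intros t Ht; symmetry; exact Ht. }
  now rewrite <- (is_derive_unique _ _ _ Hf), (is_derive_unique _ _ _ H0).
Qed.

Lemma is_derive_const_on a b (f : R -> R) (c s l : R) :
  (forall t, in_I a b t -> f t = c) -> in_I a b s -> is_derive f s l -> l = 0.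
Proof.
  intros Hc Hs; apply is_derive_locally_const with c.
  eapply filter_imp; [| exact (in_I_locally a b s Hs)]; exact Hc.
Qed.

Lemma continuous_locally_pos (f : R -> R) s :
  continuous f s -> 0 < f s -> locally s (fun t => 0 < f t).
Proof. intros Hc Hpos; apply Hc, open_gt, Hpos. Qed.

Lemma continuous_locally_nonzero (f : R -> R) s :
  continuous f s -> f s <> 0 -> locally s (fun t => f t <> 0).
Proof.
  intros Hc Hnz.
  assert (Hsq := continuous_locally_pos (fun t => f t * f t) s
                   (continuous_Rmult f f s Hc Hc) ltac:(nra)).
  eapply filter_imp; [| exact Hsq]; cbv beta; intros t Ht Hz; rewrite Hz in Ht; lra.
Qed.

Lemma continuous_nonzero_same_sign a b (f : R -> R) :
  (forall s, in_I a b s -> continuous f s) -> (forall s, in_I a b s -> f s <> 0) ->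
  forall x y, in_I a b x -> in_I a b y -> 0 < f x * f y.
Proof.
  intros Hc Hnz x y Hx Hy.
  apply (in_I_connected a b (fun t => 0 < f x * f t)) with x; auto; cycle 1.
  { specialize (Hnz x Hx); nra. }
  intros s Hs.
  assert (Hpos := continuous_locally_pos (fun t => f t * f s) s
                    (continuous_Rmult _ _ s (Hc s Hs) (continuous_const _ _))
                    ltac:(specialize (Hnz s Hs); nra)).
  eapply filter_imp; [| exact Hpos]; cbv beta; intros t Ht.
  assert (Hxx : 0 < f x * f x) by (specialize (Hnz x Hx); nra).
  split; intros Hsign; nra.
Qed.

Lemma continuous_square_const a b (f : R -> R) (K : R) :
  (forall s, in_I a b s -> continuous f s) -> (forall s, in_I a b s -> f s * f s = K) ->
  forall x y, in_I a b x -> in_I a b y -> f x = f y.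
Proof.
  intros Hc HK x y Hx Hy.
  destruct (Req_dec K 0) as [-> | HK0].
  - assert (Hx0 := HK x Hx); assert (Hy0 := HK y Hy).
    apply Rmult_integral in Hx0, Hy0; lra.
  - assert (Hnz : forall s, in_I a b s -> f s <> 0)
      by (intros s Hs Hz; apply HK0; rewrite <- (HK s Hs), Hz; ring).
    assert (Hxy := continuous_nonzero_same_sign a b f Hc Hnz x y Hx Hy).
    assert (Hsq : (f x - f y) * (f x + f y) = 0)
      by (transitivity (f x * f x - f y * f y); [ring | rewrite (HK x Hx), (HK y Hy); ring]).
    apply Rmult_integral in Hsq as [Hsq | Hsq]; [lra |].
    replace (f y) with (- f x) in Hxy by lra; nra.
Qed.

(** * Helices *)

Lemma helical_curve_ext a b (X Y : R -> vec3) :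
  (forall s, in_I a b s -> X s = Y s) -> helical_curve a b X <-> helical_curve a b Y.
Proof.
  intros HXY; split; intros (d & th & Hd & Hth); exists d, th; split; auto;
    intros s Hs; rewrite <- (Hth s Hs), (HXY s Hs); reflexivity.
Qed.

Lemma helical_curve_opp a b (X : R -> vec3) :
  helical_curve a b (fun s => vscale (-1) (X s)) <-> helical_curve a b X.
Proof.
  assert (Hnorm : forall d, vnorm (vscale (-1) d) = vnorm d)
    by (intros d; unfold vnorm; f_equal; vec3_ring).
  split; intros (d & th & Hd & Hth); exists (vscale (-1) d), th;
    (split; [rewrite Hnorm; exact Hd |]); intros s Hs; rewrite <- (Hth s Hs); vec3_ring.
Qed.

Lemma helical_curve_intro a b (X : R -> vec3) (d : vec3) (s0 : R) :
  vnorm d = 1 -> (forall s, in_I a b s -> dot (X s) (X s) = 1) -> in_I a b s0 ->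
  (forall s, in_I a b s -> dot (X s) d = dot (X s0) d) -> helical_curve a b X.
Proof.
  intros Hd HX Hs0 Hconst; exists d, (acos (dot (X s0) d)); split; [exact Hd |].
  intros s Hs; rewrite cos_acos; [apply Hconst, Hs |].
  apply dot_unit_bound; [apply HX, Hs0 | apply vnorm_1_dot, Hd].
Qed.

Lemma general_helix_iff a b (c c' : R -> vec3) :
  (forall s, in_I a b s -> vderiv c s (c' s) /\ c' s <> vzero) ->
  general_helix a b c <-> helical_curve a b (fun s => vunit (c' s)).
Proof.
  intros Hc; split.
  - intros (c'' & Hc'' & Hhel).
    apply (helical_curve_ext a b (fun s => vunit (c'' s))); [| exact Hhel].
    intros s Hs; f_equal; exact (vderiv_unique c s _ _ (proj1 (Hc'' s Hs)) (proj1 (Hc s Hs))).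
  - intros Hhel; exists c'; split; [exact Hc | exact Hhel].
Qed.

(** * The Frenet frame of a unit tangent field *)

Definition binormal (T P : R -> vec3) (s : R) : vec3 := vunit (cross (T s) (P s)).

(* For a unit tangent [T] with [P = T'] and [Q = T''] this is [kappa^2 tau] in Frenet terms. *)
Definition scaled_torsion (T P Q : R -> vec3) (s : R) : R := dot (cross (T s) (P s)) (Q s).

Section UnitTangentField.

Variables (a b : Rbar) (T P Q : R -> vec3).
Hypothesis I_nonempty : Rbar_lt a b.
Hypothesis T_deriv : forall s, in_I a b s -> vderiv T s (P s).
Hypothesis P_deriv : forall s, in_I a b s -> vderiv P s (Q s).
Hypothesis Q_continuous : forall s, in_I a b s -> vcontinuous Q s.
Hypothesis T_unit : forall s, in_I a b s -> dot (T s) (T s) = 1.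
Hypothesis P_nonzero : forall s, in_I a b s -> 0 < dot (P s) (P s).

Local Notation N := (binormal T P).
Local Notation sigma := (scaled_torsion T P Q).

Lemma dot_T_P s : in_I a b s -> dot (T s) (P s) = 0.
Proof.
  intros Hs.
  assert (H := is_derive_const_on a b _ 1 s _ T_unit Hs
                 (is_derive_dot T T s _ _ (T_deriv s Hs) (T_deriv s Hs))).
  rewrite (dot_comm (P s)) in H; lra.
Qed.

Lemma dot_Q_T s : in_I a b s -> dot (Q s) (T s) = - dot (P s) (P s).
Proof.
  intros Hs.
  assert (H := is_derive_const_on a b _ 0 s _ dot_T_P Hs
                 (is_derive_dot T P s _ _ (T_deriv s Hs) (P_deriv s Hs))).
  rewrite (dot_comm (T s)) in H; lra.
Qed.

Lemma vnorm_cross_T_P s : in_I a b s -> vnorm (cross (T s) (P s)) = vnorm (P s).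
Proof.
  intros Hs; unfold vnorm; f_equal.
  rewrite dot_cross_cross, T_unit, (dot_comm (P s) (T s)), dot_T_P by exact Hs; ring.
Qed.

Lemma dot_binormal_l s e : in_I a b s -> dot (N s) e = dot (cross (T s) (P s)) e / vnorm (P s).
Proof.
  intros Hs; unfold binormal; rewrite dot_vunit_l, vnorm_cross_T_P by exact Hs; reflexivity.
Qed.

Lemma binormal_unit s : in_I a b s -> dot (N s) (N s) = 1.
Proof.
  intros Hs; apply dot_vunit_self.
  rewrite dot_cross_cross, T_unit, (dot_comm (P s) (T s)), dot_T_P by exact Hs.
  assert (H := P_nonzero s Hs); lra.
Qed.

Lemma dot_T_binormal s : in_I a b s -> dot (T s) (N s) = 0.
Proof. intros Hs; rewrite dot_comm, dot_binormal_l, dot_cross_l by exact Hs; unfold Rdiv; ring. Qed.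

(* Parseval's identity in the orthogonal frame [T, P, N]. *)
Lemma dot_self_binormal_frame s d : in_I a b s ->
  dot d d * dot (P s) (P s) =
  (dot (T s) d ^ 2 + dot (N s) d ^ 2) * dot (P s) (P s) + dot (P s) d ^ 2.
Proof.
  intros Hs.
  assert (Hgram := dot_cross_mul (T s) (P s) d d).
  rewrite T_unit, (dot_comm (P s) (T s)), dot_T_P, (dot_comm d (P s)), (dot_comm d (T s)) in Hgram
    by exact Hs.
  rewrite dot_binormal_l, <- (vnorm_sq (P s)) by exact Hs.
  rewrite <- vnorm_sq in Hgram.
  assert (Hn := vnorm_pos _ (P_nonzero s Hs)).
  replace ((dot (cross (T s) (P s)) d / vnorm (P s)) ^ 2)
    with (dot (cross (T s) (P s)) d * dot (cross (T s) (P s)) d / (vnorm (P s) * vnorm (P s)))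
    by (field; lra).
  rewrite Hgram; field; lra.
Qed.

(* The Frenet formula [N' = - tau P / |P|], tested against [e]. *)
Lemma is_derive_dot_binormal s e : in_I a b s ->
  is_derive (fun t => dot (N t) e) s (- sigma s * dot (P s) e / vnorm (P s) ^ 3).
Proof.
  intros Hs.
  assert (HX := vderiv_cross T P s _ _ (T_deriv s Hs) (P_deriv s Hs)).
  replace (vadd (cross (P s) (P s)) (cross (T s) (Q s))) with (cross (T s) (Q s))
    in HX by (apply vec3_eq; vec3_ring).
  assert (HXpos : 0 < dot (cross (T s) (P s)) (cross (T s) (P s))).
  { rewrite dot_cross_cross, T_unit, (dot_comm (P s) (T s)), dot_T_P by exact Hs.
    assert (H := P_nonzero s Hs); lra. }
  eapply is_derive_val; [exact (is_derive_dot_vunit _ s _ e HX HXpos) |]; cbv beta.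
  rewrite vnorm_cross_T_P, dot_cross_cross, T_unit, (dot_comm (P s) (T s)), dot_T_P
    by exact Hs.
  assert (Hexp := dot_self_mul_dot_cross (T s) (P s) (Q s) e).
  rewrite dot_T_P, <- vnorm_sq in Hexp by exact Hs.
  unfold scaled_torsion.
  assert (Hn := vnorm_pos _ (P_nonzero s Hs)).
  assert (Hcross : dot (cross (T s) (Q s)) e =
    (dot (Q s) (P s) * dot (cross (T s) (P s)) e - dot (cross (T s) (P s)) (Q s) * dot (P s) e)
    / (vnorm (P s) * vnorm (P s))).
  { apply (Rmult_eq_reg_l (vnorm (P s) * vnorm (P s))); [rewrite Hexp; field | ]; nra. }
  rewrite Hcross, (dot_comm (Q s) (P s)); field; lra.
Qed.

Lemma dot_Q_of_scaled_torsion_eq0 s d : in_I a b s -> sigma s = 0 -> dot (P s) d = 0 ->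
  dot (Q s) d = - dot (P s) (P s) * dot (T s) d.
Proof.
  intros Hs Hsigma Hpd.
  assert (Hgram := dot_cross_mul (T s) (P s) (Q s) d).
  unfold scaled_torsion in Hsigma.
  rewrite Hsigma, T_unit, (dot_comm (P s) (T s)), dot_T_P, Hpd, dot_Q_T
    in Hgram by exact Hs.
  assert (H := P_nonzero s Hs).
  apply (Rmult_eq_reg_l (dot (P s) (P s))); nra.
Qed.

Lemma helical_binormal_of_helical : helical_curve a b T -> helical_curve a b N.
Proof.
  intros (d & th & Hd & HTd).
  destruct (in_I_inhabited a b I_nonempty) as [s0 Hs0].
  assert (Hdd := proj1 (vnorm_1_dot d) Hd).
  assert (HPd : forall s, in_I a b s -> dot (P s) d = 0)
    by (intros s Hs; exact (is_derive_const_on a b _ _ s _ HTd Hs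
                              (is_derive_dot_const T s _ d (T_deriv s Hs)))).
  assert (HNd : forall s, in_I a b s -> dot (N s) d * dot (N s) d = 1 - cos th ^ 2).
  { intros s Hs; assert (H := dot_self_binormal_frame s d Hs).
    rewrite Hdd, HTd, HPd in H by exact Hs.
    assert (Hpos := P_nonzero s Hs).
    apply (Rmult_eq_reg_r (dot (P s) (P s))); nra. }
  assert (HNc : forall s, in_I a b s -> continuous (fun t => dot (N t) d) s)
    by (intros s Hs; apply (ex_derive_continuous (V := R_NormedModule));
        eexists; exact (is_derive_dot_binormal s d Hs)).
  apply (helical_curve_intro a b N d s0 Hd binormal_unit Hs0).
  intros s Hs; exact (continuous_square_const a b _ _ HNc HNd s s0 Hs Hs0).
Qed.

Lemma helical_of_dot_P_zero d :
  vnorm d = 1 -> (forall s, in_I a b s -> dot (P s) d = 0) -> helical_curve a b T.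
Proof.
  intros Hd HPd; destruct (in_I_inhabited a b I_nonempty) as [s0 Hs0].
  apply (helical_curve_intro a b T d s0 Hd T_unit Hs0); intros s Hs.
  apply (is_derive_zero_const a b (fun t => dot (T t) d)); auto.
  intros u Hu; rewrite <- (HPd u Hu); exact (is_derive_dot_const T u _ d (T_deriv u Hu)).
Qed.

Lemma helical_of_scaled_torsion_eq0 : (forall s, in_I a b s -> sigma s = 0) -> helical_curve a b T.
Proof.
  intros Hsigma0; destruct (in_I_inhabited a b I_nonempty) as [s0 Hs0].
  assert (HN : forall s, in_I a b s -> N s = N s0).
  { intros s Hs; apply vec3_eq_dot; intros e.
    apply (is_derive_zero_const a b (fun t => dot (N t) e)); auto.
    intros u Hu; eapply is_derive_val; [exact (is_derive_dot_binormal u e Hu) |].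
    rewrite (Hsigma0 u Hu); unfold Rdiv; ring. }
  apply (helical_curve_intro a b T (N s0) s0); auto.
  - apply vnorm_1_dot, binormal_unit, Hs0.
  - intros s Hs; rewrite (dot_T_binormal s0 Hs0), <- (HN s Hs); exact (dot_T_binormal s Hs).
Qed.

Section SlantBinormal.

Variables (d : vec3) (c : R).
Hypothesis d_unit : dot d d = 1.
Hypothesis binormal_slant : forall s, in_I a b s -> dot (N s) d = c.

Lemma scaled_torsion_mul_dot_P s : in_I a b s -> sigma s * dot (P s) d = 0.
Proof.
  intros Hs.
  assert (H := is_derive_const_on a b _ _ s _ binormal_slant Hs (is_derive_dot_binormal s d Hs)).
  assert (Hn3 : 0 < vnorm (P s) ^ 3) by (apply pow_lt, vnorm_pos, P_nonzero, Hs).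
  unfold Rdiv in H; apply Rmult_integral in H as [H | H]; [nra |].
  apply Rinv_neq_0_compat in H; lra.
Qed.

Lemma dot_Q_nonzero s : c * c <> 1 -> in_I a b s ->
  sigma s = 0 -> dot (P s) d = 0 -> dot (Q s) d <> 0.
Proof.
  intros Hc Hs Hsigma Hpd.
  rewrite (dot_Q_of_scaled_torsion_eq0 s d Hs Hsigma Hpd).
  assert (H := dot_self_binormal_frame s d Hs).
  rewrite d_unit, binormal_slant, Hpd in H by exact Hs.
  assert (Hpos := P_nonzero s Hs).
  intros Hz; apply Rmult_integral in Hz as [Hz | Hz]; [lra |].
  rewrite Hz in H; apply Hc; nra.
Qed.

(* Where [sigma] vanishes but [P.d] does not, [sigma] vanishes nearby because [sigma P.d = 0].
   Where both vanish, [Q.d], the derivative of [P.d], does not, so [P.d] cannot vanish on a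
   neighbourhood of any nearby point, and neither can [sigma]. *)
Lemma scaled_torsion_eq0_locally_constant u : c * c <> 1 -> in_I a b u ->
  locally u (fun t => sigma t = 0 <-> sigma u = 0).
Proof.
  intros Hc Hu.
  assert (Hsc : forall s, in_I a b s -> continuous sigma s).
  { intros s Hs; apply vcontinuous_dot; [| apply Q_continuous, Hs].
    apply vcontinuous_cross; eapply vderiv_continuous; [apply T_deriv | apply P_deriv]; exact Hs. }
  assert (HPd' : forall s, in_I a b s -> is_derive (fun t => dot (P t) d) s (dot (Q s) d))
    by (intros s Hs; apply is_derive_dot_const, P_deriv, Hs).
  destruct (Req_dec (sigma u) 0) as [Hsu | Hsu].
  2: { eapply filter_imp; [| exact (continuous_locally_nonzero _ u (Hsc u Hu) Hsu)].
       intros t Ht; cbv beta in Ht; tauto. }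
  enough (Hsigma0 : locally u (fun t => sigma t = 0))
    by (eapply filter_imp; [| exact Hsigma0]; intros t Ht; cbv beta in Ht; tauto).
  destruct (Req_dec (dot (P u) d) 0) as [Hpu | Hpu].
  - assert (Hq := continuous_locally_nonzero _ u
                    (vcontinuous_dot _ _ u (Q_continuous u Hu) (vcontinuous_const d u))
                    (dot_Q_nonzero u Hc Hu Hsu Hpu)).
    eapply filter_imp; [| exact (filter_and _ _ Hq (in_I_locally a b u Hu))].
    intros t [Hqt Ht]; apply NNPP; intros Hst.
    apply Hqt, (is_derive_locally_const (fun t => dot (P t) d) 0 t); [| exact (HPd' t Ht)].
    eapply filter_imp; [| exact (filter_and _ _ (continuous_locally_nonzero _ t (Hsc t Ht) Hst)
                                              (in_I_locally a b t Ht))].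
    intros v [Hsv Hv]; assert (H := scaled_torsion_mul_dot_P v Hv).
    apply Rmult_integral in H as [H | H]; [contradiction | exact H].
  - assert (Hpc := ex_derive_continuous (V := R_NormedModule) _ _ (ex_intro _ _ (HPd' u Hu))).
    assert (Hp := continuous_locally_nonzero _ u Hpc Hpu).
    eapply filter_imp; [| exact (filter_and _ _ Hp (in_I_locally a b u Hu))].
    intros t [Hpt Ht]; assert (H := scaled_torsion_mul_dot_P t Ht).
    apply Rmult_integral in H as [H | H]; [exact H | contradiction].
Qed.

Lemma slant_dichotomy :
  (forall s, in_I a b s -> dot (P s) d = 0) \/ (forall s, in_I a b s -> sigma s = 0).
Proof.
  destruct (Req_dec (c * c) 1) as [Hc | Hc].
  - (* [c^2 = 1] forces [d = +-N], which is orthogonal to [P] *)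
    left; intros s Hs.
    assert (H := dot_self_binormal_frame s d Hs).
    rewrite d_unit, binormal_slant in H by exact Hs.
    assert (Hpos := P_nonzero s Hs).
    nra.
  - destruct (in_I_inhabited a b I_nonempty) as [s0 Hs0].
    assert (Hconn := in_I_connected a b _ (fun u => scaled_torsion_eq0_locally_constant u Hc)).
    destruct (Req_dec (sigma s0) 0) as [Hs0z | Hs0z].
    + right; intros s Hs.
      exact (Hconn s0 s Hs0 Hs Hs0z).
    + left; intros s Hs.
      assert (Hsz : sigma s <> 0).
      { intros Hz; apply Hs0z.
        exact (Hconn s s0 Hs Hs0 Hz). }
      assert (H := scaled_torsion_mul_dot_P s Hs).
      apply Rmult_integral in H as [H | H]; [contradiction | exact H].
Qed.

End SlantBinormal.

Lemma helical_of_helical_binormal : helical_curve a b N -> helical_curve a b T.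
Proof.
  intros (d & ph & Hd & HNd).
  destruct (slant_dichotomy d (cos ph) (proj1 (vnorm_1_dot d) Hd) HNd) as [HPd | Hsigma0].
  - exact (helical_of_dot_P_zero d Hd HPd).
  - exact (helical_of_scaled_torsion_eq0 Hsigma0).
Qed.

Theorem helical_iff_helical_binormal : helical_curve a b T <-> helical_curve a b N.
Proof. split; [apply helical_binormal_of_helical | apply helical_of_helical_binormal]. Qed.

End UnitTangentField.

Lemma general_helix_iff_helical_tangent a b (c T : R -> vec3) (r : R -> R) :
  Rbar_lt a b ->
  (forall s, in_I a b s -> vderiv c s (vscale (r s) (T s))) ->
  (forall s, in_I a b s -> continuous r s) -> (forall s, in_I a b s -> r s <> 0) ->
  (forall s, in_I a b s -> dot (T s) (T s) = 1) ->
  general_helix a b c <-> helical_curve a b T.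
Proof.
  intros Hab Hc Hrc Hr0 HT.
  rewrite (general_helix_iff a b c (fun s => vscale (r s) (T s))).
  2: { intros s Hs; split; [apply Hc, Hs |]; intros Hz.
       apply (f_equal (fun v => dot v v)) in Hz.
       rewrite dot_scale_l, dot_comm, dot_scale_l, HT, dot_zero_r in Hz by exact Hs.
       apply (Hr0 s Hs); nra. }
  destruct (in_I_inhabited a b Hab) as [s0 Hs0].
  assert (Hsign := continuous_nonzero_same_sign a b r Hrc Hr0 s0).
  destruct (Rlt_or_le 0 (r s0)) as [Hpos | Hneg].
  - apply helical_curve_ext; intros s Hs; apply vunit_scale_pos; auto.
    specialize (Hsign s Hs0 Hs); nra.
  - rewrite <- (helical_curve_opp a b T).
    apply helical_curve_ext; intros s Hs; apply vunit_scale_neg; auto.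
    specialize (Hsign s Hs0 Hs); nra.
Qed.

(** * The Darboux frame *)

Definition vDerive_n (X : R -> vec3) (n : nat) (t : R) : vec3 :=
  mkv (Derive_n (fun u => vx (X u)) n t) (Derive_n (fun u => vy (X u)) n t)
    (Derive_n (fun u => vz (X u)) n t).

Lemma smooth_on_is_derive_n a b (f : R -> R) n s : smooth_on a b f -> in_I a b s ->
  is_derive (Derive_n f n) s (Derive_n f (S n) s).
Proof. intros Hf Hs; apply Derive_correct, (Hf (S n) s Hs). Qed.

Lemma smooth_on_continuous_n a b (f : R -> R) n s : smooth_on a b f -> in_I a b s ->
  continuous (Derive_n f n) s.
Proof.
  intros Hf Hs; apply (ex_derive_continuous (V := R_NormedModule)).
  eexists; exact (smooth_on_is_derive_n a b f n s Hf Hs).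
Qed.

Lemma vsmooth_on_vderiv_n a b X n s : vsmooth_on a b X -> in_I a b s ->
  vderiv (vDerive_n X n) s (vDerive_n X (S n) s).
Proof.
  intros (H1 & H2 & H3) Hs; refine (conj _ (conj _ _));
    apply (smooth_on_is_derive_n a b); assumption.
Qed.

Lemma cross_darboux (T U : vec3) (kg kn : R) : dot T T = 1 -> dot T U = 0 ->
  cross T (vadd (vscale kg (cross U T)) (vscale kn U)) =
  vadd (vscale (- kn) (cross U T)) (vscale kg U).
Proof.
  intros HT HTU.
  transitivity (vadd (vscale (- kn) (cross U T))
                  (vadd (vscale (kg * dot T T) U) (vscale (- kg * dot T U) T)));
    [| rewrite HT, HTU]; apply vec3_eq; vec3_ring.
Qed.

Section DarbouxFrame.

Variables (a b : Rbar) (alpha T V U : R -> vec3) (kg kn tg : R -> R).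
Hypothesis frame : darboux_frame a b alpha T V U kg kn tg.

(* [kg], [kn] and [tg] are not assumed differentiable, so [T'] and [T''] are taken from the
   smoothness of [alpha]. *)
Local Notation P := (vDerive_n alpha 2).

Lemma darboux_T_vderiv s : in_I a b s -> vderiv T s (P s).
Proof.
  destruct frame as (Halpha & _ & Hframe); intros Hs.
  apply (vderiv_ext_loc (vDerive_n alpha 1));
    [| exact (vsmooth_on_vderiv_n a b alpha 1 s Halpha Hs)].
  eapply filter_imp; [| exact (in_I_locally a b s Hs)]; intros t Ht.
  destruct (Hframe t Ht) as ((H1 & H2 & H3) & _).
  apply vec3_eq; apply is_derive_unique; assumption.
Qed.

Lemma darboux_P_vderiv s : in_I a b s -> vderiv P s (vDerive_n alpha 3 s).
Proof. apply vsmooth_on_vderiv_n, frame. Qed.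

Lemma darboux_vDerive_3_continuous s : in_I a b s -> vcontinuous (vDerive_n alpha 3) s.
Proof. intros Hs; eapply vderiv_continuous, vsmooth_on_vderiv_n; [apply frame | exact Hs]. Qed.

Lemma darboux_P s : in_I a b s -> P s = vadd (vscale (kg s) (V s)) (vscale (kn s) (U s)).
Proof.
  intros Hs; destruct frame as (_ & _ & Hframe).
  destruct (Hframe s Hs) as (_ & _ & _ & _ & _ & HT' & _).
  exact (vderiv_unique T s _ _ (darboux_T_vderiv s Hs) HT').
Qed.

Lemma darboux_orthonormal s : in_I a b s ->
  dot (T s) (T s) = 1 /\ dot (U s) (U s) = 1 /\ dot (V s) (V s) = 1 /\
  dot (V s) (T s) = 0 /\ dot (U s) (T s) = 0 /\ dot (V s) (U s) = 0.
Proof.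
  intros Hs; destruct frame as (_ & _ & Hframe).
  destruct (Hframe s Hs) as (_ & HT & HU & HTU & -> & _).
  apply vnorm_1_dot in HT, HU.
  rewrite dot_cross_cross, dot_cross_r, dot_cross_l, HT, HU, (dot_comm (U s)), HTU.
  repeat split; ring.
Qed.

Lemma darboux_kg_kn s : in_I a b s -> kg s = dot (P s) (V s) /\ kn s = dot (P s) (U s).
Proof.
  intros Hs; destruct (darboux_orthonormal s Hs) as (_ & HU & HV & _ & _ & HVU).
  rewrite darboux_P, !dot_add_l, !dot_scale_l, HU, HV, HVU, (dot_comm (U s)), HVU by exact Hs.
  split; ring.
Qed.

Lemma darboux_curvatures_continuous s : in_I a b s -> continuous kg s /\ continuous kn s.
Proof.
  intros Hs; destruct frame as (_ & _ & Hframe).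
  assert (HP := vderiv_continuous _ _ _ (darboux_P_vderiv s Hs)).
  destruct (Hframe s Hs) as (_ & _ & _ & _ & _ & _ & HV & HU).
  assert (Hloc := in_I_locally a b s Hs).
  split; (eapply continuous_ext_loc;
          [eapply filter_imp; [| exact Hloc]; intros t Ht; symmetry; apply (darboux_kg_kn t Ht) |]);
    apply vcontinuous_dot; auto; eapply vderiv_continuous; eassumption.
Qed.

Lemma darboux_dot_P_self s : in_I a b s -> dot (P s) (P s) = kg s ^ 2 + kn s ^ 2.
Proof.
  intros Hs; destruct (darboux_kg_kn s Hs) as [Hkg Hkn].
  rewrite (darboux_P s Hs) at 2.
  rewrite dot_comm, dot_add_l, !dot_scale_l, (dot_comm (V s)), (dot_comm (U s)), <- Hkg, <- Hkn.
  ring.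
Qed.

Lemma darboux_Dn s : in_I a b s -> Dn V U kg kn s = cross (T s) (P s).
Proof.
  intros Hs; destruct frame as (_ & _ & Hframe).
  destruct (Hframe s Hs) as (_ & HT & _ & HTU & HV & _).
  apply vnorm_1_dot in HT.
  unfold Dn; rewrite darboux_P, HV, cross_darboux by assumption; reflexivity.
Qed.

Lemma assoc_curve_tangent_coeff y1 y2 y3 (r s : R) :
  smooth_on a b y1 -> smooth_on a b y2 -> smooth_on a b y3 -> in_I a b s ->
  vderiv (assoc_curve alpha T V U y1 y2 y3) s (vscale r (T s)) ->
  r = 1 + Derive y1 s - y2 s * kg s - y3 s * kn s.
Proof.
  intros Hy1 Hy2 Hy3 Hs Hgamma; destruct frame as (_ & _ & Hframe).
  destruct (Hframe s Hs) as (Halpha & _ & _ & _ & _ & HT' & HV' & HU').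
  destruct (darboux_orthonormal s Hs) as (HT & _ & _ & HVT & HUT & _).
  assert (Hder := vderiv_add _ _ _ _ _ Halpha
    (vderiv_add _ _ _ _ _ (vderiv_scale _ _ _ _ _ (smooth_on_is_derive_n a b y1 0 s Hy1 Hs) HT')
      (vderiv_add _ _ _ _ _ (vderiv_scale _ _ _ _ _ (smooth_on_is_derive_n a b y2 0 s Hy2 Hs) HV')
         (vderiv_scale _ _ _ _ _ (smooth_on_is_derive_n a b y3 0 s Hy3 Hs) HU')))).
  assert (E := f_equal (fun v => dot v (T s)) (vderiv_unique _ _ _ _ Hgamma Hder)); cbv beta in E.
  rewrite !dot_add_l, !dot_scale_l, !dot_add_l, !dot_scale_l, HT, HVT, HUT in E.
  change (Derive_n y2 0 s) with (y2 s) in E; change (Derive_n y3 0 s) with (y3 s) in E.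
  ring_simplify in E; rewrite E; change (Derive_n y1 1 s) with (Derive y1 s); ring.
Qed.

Lemma assoc_curve_general_helix_iff y1 y2 y3 :
  Rbar_lt a b -> smooth_on a b y1 -> smooth_on a b y2 -> smooth_on a b y3 ->
  (exists Rf : R -> R, forall s, in_I a b s ->
      Rf s <> 0 /\ vderiv (assoc_curve alpha T V U y1 y2 y3) s (vscale (Rf s) (T s))) ->
  general_helix a b (assoc_curve alpha T V U y1 y2 y3) <-> helical_curve a b T.
Proof.
  intros Hab Hy1 Hy2 Hy3 [Rf HRf].
  set (r := fun t => 1 + Derive y1 t - y2 t * kg t - y3 t * kn t).
  assert (Hr : forall s, in_I a b s -> Rf s = r s)
    by (intros s Hs;
        exact (assoc_curve_tangent_coeff y1 y2 y3 _ s Hy1 Hy2 Hy3 Hs (proj2 (HRf s Hs)))).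
  apply (general_helix_iff_helical_tangent a b _ T r Hab).
  - intros s Hs; rewrite <- (Hr s Hs); apply HRf, Hs.
  - intros s Hs; destruct (darboux_curvatures_continuous s Hs) as [Hkg Hkn].
    unfold r; apply continuous_Rminus; [apply continuous_Rminus; [apply continuous_Rplus |] |].
    + apply continuous_const.
    + exact (smooth_on_continuous_n a b y1 1 s Hy1 Hs).
    + exact (continuous_Rmult _ _ s (smooth_on_continuous_n a b y2 0 s Hy2 Hs) Hkg).
    + exact (continuous_Rmult _ _ s (smooth_on_continuous_n a b y3 0 s Hy3 Hs) Hkn).
  - intros s Hs; rewrite <- (Hr s Hs); apply HRf, Hs.
  - intros s Hs; apply (darboux_orthonormal s Hs).
Qed.

Lemma darboux_helical_iff_Dn_slant :
  Rbar_lt a b -> (forall s, in_I a b s -> kg s <> 0 \/ kn s <> 0) ->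
  helical_curve a b T <-> Dn_slant_helix a b V U kg kn.
Proof.
  intros Hab Hk.
  change (Dn_slant_helix a b V U kg kn) with (helical_curve a b (fun s => vunit (Dn V U kg kn s))).
  rewrite (helical_curve_ext a b _ (binormal T P) (fun s Hs => f_equal vunit (darboux_Dn s Hs))).
  apply (helical_iff_helical_binormal a b T P (vDerive_n alpha 3) Hab
           darboux_T_vderiv darboux_P_vderiv darboux_vDerive_3_continuous).
  - intros s Hs; apply (darboux_orthonormal s Hs).
  - intros s Hs; rewrite (darboux_dot_P_self s Hs); destruct (Hk s Hs); nra.
Qed.

End DarbouxFrame.

Theorem theorem3p1 (a b : Rbar) (alpha T V U : R -> vec3) (kg kn tg : R -> R)
    (y1 y2 y3 : R -> R) :
  Rbar_lt a b ->
  darboux_frame a b alpha T V U kg kn tg ->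
  (forall s, in_I a b s -> kg s <> 0 \/ kn s <> 0) ->
  smooth_on a b y1 -> smooth_on a b y2 -> smooth_on a b y3 ->
  (exists Rf : R -> R, forall s, in_I a b s ->
      Rf s <> 0 /\ vderiv (assoc_curve alpha T V U y1 y2 y3) s (vscale (Rf s) (T s))) ->
  (general_helix a b (assoc_curve alpha T V U y1 y2 y3) <-> helical_curve a b T) /\
  (helical_curve a b T <-> Dn_slant_helix a b V U kg kn).
Proof.
  intros Hab Hframe Hk Hy1 Hy2 Hy3 Htangent; split.
  - exact (assoc_curve_general_helix_iff a b alpha T V U kg kn tg Hframe y1 y2 y3
             Hab Hy1 Hy2 Hy3 Htangent).
  - exact (darboux_helical_iff_Dn_slant a b alpha T V U kg kn tg Hframe Hab Hk).
Qed.
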